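(* Let $G,H\in\mathfrak{D}$ and $\xi\in\mathcal{H}(G,H)$. For every $H'\in\mathfrak{D}$ let $$\Theta_{G,H'}(\xi)=\{\zeta\in\mathcal{H}(G,H'):\mathcal{G}(\zeta)=\mathcal{G}(\xi)\}.$$ Then $\#\Theta_{G,H'}(\xi)=\#\mathcal{S}(\mathcal{G}(\xi),H')$ for every $H'\in\mathfrak{D}$.
   Context: **Digraphs and homomorphisms.** - A digraph $G$ is a pair $(V(G),A(G))$, where $V(G)$ is a finite non-empty set and $A(G)\subseteq V(G)\times V(G)$. Arcs are written $vw$. - An arc $vw$ with $v\ne w$ is proper. - A homomorphism $\xi:G\to H$ is a map $V(G)\to V(H)$ with $\xi(v)\xi(w)\in A(H)$ for all $vw\in A(G)$. $\mathcal{H}(G,H)$ is the set of homomorphisms. - A homomorphism is strict if it maps every proper arc to a proper arc. $\mathcal{S}(G,H)$ is the set of strict homomorphisms. - $\mathfrak{D}$ is the class of all digraphs. **Connectivity.** - Two vertices $u,w$ are adjacent if $uw\in A(G)$ or $wu\in A(G)$. - For $X\subseteq V(G)$ and $v,w\in X$, the vertices $v$ and $w$ are connected in $X$ if $v=w$, or if there are $z_0=v,\dots,z_I=w$ in $X$ with consecutive terms adjacent. - $\gamma_X(v)$ is the set of $w\in X$ connected to $v$ in $X$. - $\Gamma_\xi(v):=\gamma_{\xi^{-1}(\xi(v))}(v)$. **The quotient digraph.** For $\xi\in\mathcal{H}(G,H)$, $\mathcal{G}(\xi)$ is the digraph with: - vertex set $\{\Gamma_\xi(v):v\in V(G)\}$,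 a partition of $V(G)$; - arcs $\mathfrak{a}\mathfrak{b}$ whenever there are $a\in\mathfrak{a}$, $b\in\mathfrak{b}$ with $ab\in A(G)$. *)

(* A digraph is a finite (non-empty) type T with an arc
   relation e : rel T; A(G) = [set p | e p.1 p.2]. *)
From mathcomp Require Import all_boot.
Set Implicit Arguments. Unset Strict Implicit. Unset Printing Implicit Defensive.

Section Digraphs.

Definition is_hom (T U : finType) (e : rel T) (e' : rel U) (f : T -> U) : bool :=
  [forall x, forall y, e x y ==> e' (f x) (f y)].

Definition is_strict_hom (T U : finType) (e : rel T) (e' : rel U) (f : T -> U) : bool :=
  is_hom e e' f && [forall x, forall y, (e x y && (x != y)) ==> (f x != f y)].

Definition adjIn (T : finType) (e : rel T) (X : {set T}) : rel T :=
  [rel x y | [&& x \in X, y \in X & e x y || e y x]].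

Definition gamma (T : finType) (e : rel T) (X : {set T}) (v : T) : {set T} :=
  [set w in X | connect (adjIn e X) v w].

Definition Gam (T : finType) (U : eqType) (e : rel T) (xi : T -> U) (v : T) : {set T} :=
  gamma e [set w | xi w == xi v] v.

Definition qverts (T : finType) (U : eqType) (e : rel T) (xi : T -> U) : {set {set T}} :=
  [set Gam e xi v | v : T].

Definition qarcs (T : finType) (U : eqType) (e : rel T) (xi : T -> U)
  : {set {set T} * {set T}} :=
  [set p | [&& p.1 \in qverts e xi, p.2 \in qverts e xi &
              [exists a in p.1, exists b in p.2, e a b]]].

Definition qtype (T : finType) (U : eqType) (e : rel T) (xi : T -> U) : finType :=
  {X : {set T} | X \in qverts e xi}.

Definition qrel (T : finType) (U : eqType) (e : rel T) (xi : T -> U)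
  : rel (qtype e xi) :=
  fun X Y => (val X, val Y) \in qarcs e xi.

Definition same_quotient (T : finType) (U U' : eqType) (e : rel T)
  (zeta : T -> U') (xi : T -> U) : bool :=
  (qverts e zeta == qverts e xi) && (qarcs e zeta == qarcs e xi).

Definition Theta (T U U' : finType) (e : rel T) (e' : rel U') (xi : T -> U)
  : {set {ffun T -> U'}} :=
  [set z : {ffun T -> U'} | is_hom e e' z && same_quotient e z xi].

End Digraphs.
Arguments qrel {T U} e xi.
Arguments qtype {T U} e xi.
Arguments Theta {T U U'} e e' xi.

From mathcomp Require Import all_boot.
Set Implicit Arguments. Unset Strict Implicit. Unset Printing Implicit Defensive.

(* For the quotient G(xi) we then use the projection [qof] v |-> Gamma_xi(v)
   and its right inverse [qrep].  A map g on the quotient lifts to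
   [lift g] = g o qof, and a map z constant on the blocks of xi descends to
   [descend z] = z o qrep.  The two key facts are:
   - if g is strict, the blocks of [lift g] are exactly those of xi
     ([Gam_lift]), so G(lift g) = G(xi);
   - if z is a homomorphism with G(z) = G(xi), then z = lift (descend z)
     ([lift_descend]) and [descend z] is strict ([descend_strict]).
   Hence Theta(xi) is the image of the strict homomorphisms under the
   injective map [lift], which gives the equality of cardinalities. *)

Section Blocks.
Variables (T : finType) (e : rel T).

Lemma adjIn_sym (X : {set T}) : connect_sym (adjIn e X).
Proof. by apply: sym_connect_sym => x y; rewrite /adjIn /= andbCA orbC. Qed.

Lemma Gam_self (U : eqType) (f : T -> U) v : v \in Gam e f v.
Proof. by rewrite !inE eqxx connect0. Qed.

Lemma Gam_val (U : eqType) (f : T -> U) v w : w \in Gam e f v -> f w = f v.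
Proof. by rewrite !inE => /andP[/eqP]. Qed.

Lemma Gam_eq (U : eqType) (f : T -> U) v w :
  w \in Gam e f v -> Gam e f w = Gam e f v.
Proof.
move=> wv; have fw := Gam_val wv.
move: wv; rewrite !inE fw => /andP[_ cvw].
by apply/setP=> u; rewrite !inE fw (same_connect (adjIn_sym _) cvw).
Qed.

Lemma Gam_adj (U : eqType) (f : T -> U) x y :
  f y = f x -> e x y || e y x -> y \in Gam e f x.
Proof.
move=> fyx exy; rewrite !inE fyx eqxx /=; apply: connect1.
by rewrite /adjIn /= !inE fyx !eqxx.
Qed.

Lemma Gam_sub (U : eqType) (f : T -> U) v (S : {set T}) : v \in S ->
  (forall x y, x \in S -> adjIn e [set u | f u == f v] x y -> y \in S) ->
  Gam e f v \subset S.
Proof.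
move=> vS; rewrite /Gam /gamma; move: [set u | f u == f v] => F closedS.
apply/subsetP=> w; rewrite inE => /andP[_ /connectP[p pth ->]].
elim: p v vS pth => [|y p IH] x xS //= /andP[xy pth].
exact: IH (closedS _ _ xS xy) pth.
Qed.

Lemma Gam_refine (U V : eqType) (f : T -> V) (g : T -> U) v :
  (forall u w, w \in Gam e g u -> f w = f u) -> Gam e g v \subset Gam e f v.
Proof.
move=> fconst; apply: Gam_sub => [|x y xv]; first exact: Gam_self.
case/and3P=> gx gy exy; rewrite !inE in gx gy.
have fyx : f y = f x.
  by apply: fconst; apply: Gam_adj; rewrite ?(eqP gx) ?(eqP gy).
by rewrite -(Gam_eq xv); apply: Gam_adj.
Qed.

Lemma Gam_qverts (U : eqType) (f : T -> U) v : Gam e f v \in qverts e f.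
Proof. exact: imset_f. Qed.

Lemma Gam_eq_of_qverts (U V : eqType) (f : T -> V) (g : T -> U) v :
  qverts e f = qverts e g -> Gam e f v = Gam e g v.
Proof.
move=> E; have : Gam e f v \in qverts e g by rewrite -E Gam_qverts.
case/imsetP=> w _ Efw.
have vw : v \in Gam e g w by rewrite -Efw Gam_self.
by rewrite Efw (Gam_eq vw).
Qed.

(* The arcs of G(f) are determined by its vertices, so G(f) = G(g) is
   simply the equality of the two partitions. *)
Lemma same_quotientE (U V : eqType) (f : T -> V) (g : T -> U) :
  same_quotient e f g = (qverts e f == qverts e g).
Proof. by rewrite /same_quotient /qarcs; case: eqP => // ->; rewrite eqxx. Qed.

End Blocks.

Section Quotient.
Variables (T : finType) (U : eqType) (eG : rel T) (xi : T -> U).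

Local Notation Q := (qtype eG xi).

Definition qof (v : T) : Q := exist _ (Gam eG xi v) (Gam_qverts eG xi v).

Lemma qof_surj (X : Q) : exists v, qof v == X.
Proof.
case: X => X HX; case/imsetP: (HX) => v _ E.
by exists v; apply/eqP/val_inj.
Qed.

Definition qrep (X : Q) : T := xchoose (qof_surj X).

Lemma qrepK : cancel qrep qof.
Proof. by move=> X; apply/eqP; apply: (xchooseP (qof_surj X)). Qed.

Lemma qrep_mem (X : Q) : qrep X \in val X.
Proof. by rewrite -{2}(qrepK X) Gam_self. Qed.

Lemma qof_mem (X : Q) a : a \in val X -> X = qof a.
Proof.
rewrite -{1 2}(qrepK X) => aX; apply: val_inj => /=.
by rewrite (Gam_eq aX).
Qed.

Lemma qrel_of a b : eG a b -> qrel eG xi (qof a) (qof b).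
Proof.
move=> eab; rewrite /qrel /qarcs inE /= !Gam_qverts /=.
by apply/existsP; exists a; rewrite Gam_self;
  apply/existsP; exists b; rewrite Gam_self eab.
Qed.

Lemma qrelP (X Y : Q) : qrel eG xi X Y ->
  exists a b, [/\ eG a b, X = qof a & Y = qof b].
Proof.
rewrite /qrel /qarcs inE => /and3P[_ _ /existsP[a /andP[aX]]].
by case/existsP=> b /andP[bY eab]; exists a, b; split; [|exact: qof_mem..].
Qed.

Variables (U' : finType) (eH' : rel U').

Definition lift (g : {ffun Q -> U'}) : {ffun T -> U'} := [ffun v => g (qof v)].

Definition descend (z : T -> U') : {ffun Q -> U'} := [ffun X => z (qrep X)].

(* The projection is onto, so composing with it is injective. *)
Lemma lift_inj : injective lift.
Proof.
move=> g1 g2 E; apply/ffunP=> X; rewrite -(qrepK X).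
by have := congr1 (fun h : {ffun T -> U'} => h (qrep X)) E; rewrite !ffunE.
Qed.

Lemma lift_hom (g : {ffun Q -> U'}) :
  is_hom (qrel eG xi) eH' g -> is_hom eG eH' (lift g).
Proof.
move=> /forallP hg; apply/forallP=> a; apply/forallP=> b; apply/implyP=> eab.
by rewrite !ffunE; move: (hg (qof a)) => /forallP/(_ (qof b))/implyP; apply;
  apply: qrel_of.
Qed.

(* Lifting a strict homomorphism does not merge distinct blocks of xi:
   two adjacent vertices in different blocks give a proper arc of G(xi),
   which g must map to distinct vertices. *)
Lemma Gam_lift (g : {ffun Q -> U'}) : is_strict_hom (qrel eG xi) eH' g ->
  forall v, Gam eG (lift g) v = Gam eG xi v.
Proof.
case/andP=> _ /forallP strict v.
apply/eqP; rewrite eqEsubset; apply/andP; split.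
  apply: Gam_sub => [|x y xv]; first exact: Gam_self.
  case/and3P=> gx gy exy; rewrite !inE !ffunE in gx gy.
  move/eqP: gx => gx; move/eqP: gy => gy.
  have Exy : qof x = qof y.
    apply/eqP; apply: contraT => nxy; case/orP: exy => [exy|eyx].
      by move: (strict (qof x)) => /forallP/(_ (qof y));
         rewrite qrel_of // nxy gx gy eqxx.
    by move: (strict (qof y)) => /forallP/(_ (qof x));
       rewrite qrel_of // eq_sym nxy gx gy eqxx.
  by rewrite -(Gam_eq xv); have /= -> := congr1 val Exy; apply: Gam_self.
apply: Gam_refine => u w wu; rewrite !ffunE.
by rewrite (@qof_mem (qof u) w wu).
Qed.

Section Descend.
Variable z : T -> U'.
Hypothesis z_blocks : forall v, Gam eG z v = Gam eG xi v.

Lemma lift_descend v : lift (descend z) v = z v.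
Proof.
rewrite !ffunE; apply: (Gam_val (e := eG)).
by rewrite z_blocks; apply: (qrep_mem (qof v)).
Qed.

Lemma descend_qof v : descend z (qof v) = z v.
Proof. by rewrite -[RHS]lift_descend [RHS]ffunE. Qed.

(* Distinct adjacent blocks of xi are distinct blocks of z, hence have
   distinct images: the induced map on G(xi) is strict. *)
Lemma descend_strict :
  is_hom eG eH' z -> is_strict_hom (qrel eG xi) eH' (descend z).
Proof.
move=> /forallP hz; apply/andP; split.
  apply/forallP=> X; apply/forallP=> Y; apply/implyP.
  case/qrelP=> a [b [eab -> ->]]; rewrite !descend_qof.
  by move: (hz a) => /forallP/(_ b)/implyP; apply.
apply/forallP=> X; apply/forallP=> Y; apply/implyP; case/andP.
case/qrelP=> a [b [eab -> ->]]; rewrite !descend_qof; apply: contra => /eqP zab.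
apply/eqP; apply: val_inj => /=; rewrite -!z_blocks.
by apply/esym/Gam_eq/Gam_adj; rewrite ?zab ?eab.
Qed.

End Descend.

End Quotient.

Theorem lemma3 (T U : finType) (eG : rel T) (eH : rel U)
  (hT : 0 < #|T|) (hU : 0 < #|U|) (xi : T -> U) (hxi : is_hom eG eH xi) :
  forall (U' : finType) (eH' : rel U'), 0 < #|U'| ->
    #|Theta eG eH' xi| =
    #|[set g : {ffun qtype eG xi -> U'} | is_strict_hom (qrel eG xi) eH' g]|.
Proof.
move=> U' eH' _; rewrite -(card_imset _ (@lift_inj T U eG xi U')).
congr #|pred_of_set _|; apply/setP=> z; rewrite !inE same_quotientE.
apply/andP/imsetP=> [[hz /eqP Ev]|[g]].
- have z_blocks v := Gam_eq_of_qverts v Ev.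
  exists (descend eG xi z); first by rewrite inE descend_strict.
  by apply/ffunP=> v; rewrite lift_descend.
- rewrite inE => gS ->; split; first by apply: lift_hom; case/andP: gS.
  by apply/eqP/eq_imset; apply: Gam_lift gS.
Qed.
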